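(* (Quantum Minimax Theorem.) For every two-player zero-sum static quantum game (as defined in the context), with $P(\chi,\xi)=\sum_{\alpha,\beta,\gamma,\delta}\chi_{\alpha\beta}\xi_{\gamma\delta}A_{\alpha\beta\gamma\delta}$ the payoff of player I, $$\max_{\chi\in\Omega_{\mathrm{I}}}\min_{\xi\in\Omega_{\mathrm{II}}}P(\chi,\xi)=\min_{\xi\in\Omega_{\mathrm{II}}}\max_{\chi\in\Omega_{\mathrm{I}}}P(\chi,\xi).$$
   Context: A two-player static quantum game: each of two players receives $q$ qubits, $n=2^q$. The referee prepares a density matrix $\rho$ on $\mathbb{C}^n\otimes\mathbb{C}^n$, sends the first $q$ qubits to player I and the last $q$ to player II; each applies a trace-preserving completely positive map to their part and returns it; the referee measures with a POVM $\{M_m\}_{m=1}^L$ and awards player $k\in\{\mathrm{I},\mathrm{II}\}$ the amount $a^k_m\in\mathbb{R}$ on outcome $m$. The game is zero-sum if $a^{\mathrm{I}}_m=-a^{\mathrm{II}}_m$ for all $m$. Let $R=\sum_m a^{\mathrm{I}}_m M_m^\dagger M_m$. Fix a basis $\{\tilde E_\alpha\}_{\alpha=1}^{4^q}$ of the $n\times n$ complex matrices. A trace-preserving completely positive map with Kraus operators $E_j=\sum_\alpha e_{j\alpha}\tilde E_\alpha$ is represented by its chi matrix $\chi_{\alpha\beta}=\sum_j e_{j\alpha}\overline{e_{j\beta}}$. The strategy sets $\Omega_{\mathrm{I}}=\Omega_{\mathrm{II}}$ are the set of all $4^q\times4^q$ positive semidefinite Hermitian matrices $\chi$ with $\sum_{\alpha,\beta}\overline{\chi_{\alpha\beta}}\tilde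 E_\alpha^\dagger\tilde E_\beta=I$. The coefficients are $A_{\alpha\beta\gamma\delta}=\mathrm{tr}\big[R(\tilde E_\alpha\otimes\tilde E_\gamma)\rho(\tilde E_\beta^\dagger\otimes\tilde E_\delta^\dagger)\big]$; then $P(\chi,\xi)$ equals $\mathrm{tr}(R\pi)$ for the final state $\pi$ when player I plays $\chi$ and player II plays $\xi$, and it is real. *)

From mathcomp Require Import all_boot all_order all_algebra.
From mathcomp Require Export reals complex mxtens.
Set Implicit Arguments.
Unset Strict Implicit.
Unset Printing Implicit Defensive.
Import Order.TTheory GRing.Theory Num.Theory.
Local Open Scope ring_scope.

Section QGame.
Variable R : realType.
Local Notation C := (R[i]).

Definition adjmx m n (A : 'M[C]_(m, n)) : 'M[C]_(n, m) :=
  \matrix_(i, j) (A j i)^*.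

(* positive semidefinite Hermitian matrix; the order on C = R[i] is the
   usual partial order: 0 <= z iff z is a nonnegative real *)
Definition psd_herm n (A : 'M[C]_n) : Prop :=
  adjmx A = A /\ forall v : 'cV[C]_n, 0 <= (adjmx v *m A *m v) 0 0.

Definition density n (rho : 'M[C]_n) : Prop := psd_herm rho /\ \tr rho = 1.

Definition povm n L (M : 'I_L -> 'M[C]_n) : Prop :=
  \sum_(m < L) adjmx (M m) *m M m = 1%:M.

Definition obsR n L (a : 'I_L -> R) (M : 'I_L -> 'M[C]_n) : 'M[C]_n :=
  \sum_(m < L) real_complex R (a m) *: (adjmx (M m) *m M m).

Definition is_mx_basis n (E : 'I_(n * n) -> 'M[C]_n) : Prop :=
  row_free (\matrix_(a < n * n) mxvec (E a)) /\
  row_full (\matrix_(a < n * n) mxvec (E a)).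

(* strategy set Omega: chi matrices of trace-preserving CP maps *)
Definition Omega n (E : 'I_(n * n) -> 'M[C]_n) (chi : 'M[C]_(n * n)) : Prop :=
  psd_herm chi /\
  \sum_(a < n * n) \sum_(b < n * n) (chi a b)^* *: (adjmx (E a) *m E b) = 1%:M.

Definition coefA n (E : 'I_(n * n) -> 'M[C]_n) (Robs rho : 'M[C]_(n * n))
    (a b c d : 'I_(n * n)) : C :=
  \tr (Robs *m (E a *t E c) *m rho *m (adjmx (E b) *t adjmx (E d))).

Definition payoffC n (E : 'I_(n * n) -> 'M[C]_n) (Robs rho : 'M[C]_(n * n))
    (chi xi : 'M[C]_(n * n)) : C :=
  \sum_(a < n * n) \sum_(b < n * n) \sum_(c < n * n) \sum_(d < n * n)
    chi a b * xi c d * coefA E Robs rho a b c d.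

(* P as a real number (P is real, see context) *)
Definition payoff n (E : 'I_(n * n) -> 'M[C]_n) (Robs rho : 'M[C]_(n * n))
    (chi xi : 'M[C]_(n * n)) : R :=
  complex.Re (payoffC E Robs rho chi xi).

End QGame.

Definition is_min_on (R : realType) (T : Type) (S : T -> Prop) (f : T -> R) (v : R) : Prop :=
  (exists2 x, S x & f x = v) /\ (forall x, S x -> v <= f x).
Definition is_max_on (R : realType) (T : Type) (S : T -> Prop) (f : T -> R) (v : R) : Prop :=
  (exists2 x, S x & f x = v) /\ (forall x, S x -> f x <= v).

Definition maxmin_is (R : realType) (T U : Type) (S1 : T -> Prop) (S2 : U -> Prop)
    (P : T -> U -> R) (v : R) : Prop :=
  (forall x, S1 x -> exists m, is_min_on S2 (P x) m) /\
  (exists2 x0, S1 x0 & is_min_on S2 (P x0) v) /\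
  (forall x m, S1 x -> is_min_on S2 (P x) m -> m <= v).

Definition minmax_is (R : realType) (T U : Type) (S1 : T -> Prop) (S2 : U -> Prop)
    (P : T -> U -> R) (v : R) : Prop :=
  (forall y, S2 y -> exists M, is_max_on S1 (fun x => P x y) M) /\
  (exists2 y0, S2 y0 & is_max_on S1 (fun x => P x y0) v) /\
  (forall y M, S2 y -> is_max_on S1 (fun x => P x y) M -> v <= M).

From mathcomp Require Import all_boot all_order all_algebra.
From mathcomp Require Import reals complex mxtens.
From mathcomp Require Import all_classical all_reals all_analysis.
From mathcomp Require Import ring lra finmap.
Import Order.TTheory GRing.Theory Num.Theory.
Import numFieldNormedType.Exports.
Local Open Scope classical_set_scope.
Local Open Scope complex_scope.
Local Open Scope ring_scope.
Set Implicit Arguments.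
Unset Strict Implicit.
Unset Printing Implicit Defensive.

(* Once complex matrices are encoded by real coordinate vectors, the payoff is
   a real bilinear function of the two chi matrices, and the strategy set is
   convex and closed.  It is also bounded: congruence by the invertible matrix
   of the basis turns a chi matrix into a positive semidefinite matrix of trace
   n.  Von Neumann's theorem for matrix games, proved from Ville's alternative
   by a nearest-point argument, provides a saddle point for every finite set of
   strategy pairs, and the finite intersection property of the compact product
   of the strategy sets turns these into a global saddle point, whose value is
   both the max-min and the min-max. *)

Section ScalarFunctions.
Variables (R : realType) (n : nat).
Implicit Types (f : 'rV[R]_n -> R).

Lemma scalarf0 f : scalar f -> f 0 = 0.
Proof. by move=> lf; have := lf 1 0 0; rewrite scale1r addr0 mul1r; lra. Qed.

Lemma scalarfD f : scalar f -> {morph f : u v / u + v}.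
Proof. by move=> lf u v; rewrite -[u]scale1r lf mul1r scale1r. Qed.

Lemma scalarfZ f : scalar f -> forall a u, f (a *: u) = a * f u.
Proof. by move=> lf a u; rewrite -[a *: u]addr0 lf scalarf0 // addr0. Qed.

Lemma scalarf_sum f : scalar f -> forall (I : Type) (r : seq I) (P : pred I) F,
  f (\sum_(i <- r | P i) F i) = \sum_(i <- r | P i) f (F i).
Proof.
move=> lf I r P F; apply: (big_rec2 (fun u x => f u = x)); first exact: scalarf0.
by move=> i u x _ <-; rewrite scalarfD.
Qed.

Lemma continuous_sum (T : topologicalType) k (h : 'I_k -> T -> R) :
  (forall i, continuous (h i)) -> continuous (fun t => \sum_(i < k) h i t).
Proof.
elim: k h => [|k IH] h hc.
  by under eq_fun do rewrite big_ord0; exact: cst_continuous.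
under eq_fun do rewrite big_ord_recr /=.
by move=> t; apply: continuousD; [exact: (IH (fun i => h (widen_ord _ i))) | exact: hc].
Qed.

Lemma scalar_continuous f : scalar f -> continuous f.
Proof.
move=> lf; have -> : f = fun u => \sum_(i < n) u 0 i * f (delta_mx 0 i).
  apply: funext => u; rewrite {1}(matrix_sum_delta u) big_ord1 (scalarf_sum lf).
  by apply: eq_bigr => i _; rewrite scalarfZ.
apply: continuous_sum => i u; apply: continuousM; first exact: coord_continuous.
exact: cst_continuous.
Qed.

Lemma closed_scalar_eq f c : scalar f -> closed [set u | f u = c].
Proof.
by move=> lf; exact: (continuous_closedP f).1 (scalar_continuous lf) _ (@closed_eq _ c).
Qed.

Lemma closed_scalar_ge f c : scalar f -> closed [set u | c <= f u].
Proof.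
by move=> lf; exact: (continuous_closedP f).1 (scalar_continuous lf) _ (@closed_ge _ c).
Qed.

End ScalarFunctions.

Lemma closed_forall (T : topologicalType) (I : Type) (F : I -> set T) :
  (forall i, closed (F i)) -> closed [set x | forall i, F i x].
Proof.
move=> hF; have -> : [set x | forall i, F i x] = \bigcap_(i in setT) F i.
  by apply/seteqP; split=> x h i //; exact: h.
by apply: closed_bigI => i _; exact: hF.
Qed.

Lemma continuous_bigmin (R : realType) (T : topologicalType) k (h : 'I_k -> T -> R)
    (h0 : T -> R) :
  continuous h0 -> (forall i, continuous (h i)) ->
  continuous (fun t => \big[Order.min/h0 t]_(i < k) h i t).
Proof.
move=> c0; elim: k h => [|k IH] h hc; first by under eq_fun do rewrite big_ord0.
under eq_fun do rewrite big_ord_recl.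
exact: (min_fun_continuous (hc ord0) (IH _ (fun i => hc (lift ord0 i)))).
Qed.

Section Simplex.
Variable R : realType.

Definition simplex k (l : 'rV[R]_k) := (forall i, 0 <= l 0 i) /\ \sum_i l 0 i = 1.

Lemma simplex_delta k (j : 'I_k) : simplex (delta_mx 0 j).
Proof.
split=> [i|]; first by rewrite mxE ler0n.
rewrite (bigD1 j) //= big1 => [|i /negbTE nij]; first by rewrite mxE !eqxx addr0.
by rewrite mxE nij andbF.
Qed.

Lemma simplex_conv k (l m : 'rV[R]_k) t : simplex l -> simplex m -> 0 <= t <= 1 ->
  simplex ((1 - t) *: l + t *: m).
Proof.
move=> [l0 l1] [m0 m1] /andP[t0 t1]; split=> [i|].
  by rewrite !mxE; apply: addr_ge0; apply: mulr_ge0 => //; lra.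
under eq_bigr do rewrite !mxE.
by rewrite big_split /= -!mulr_sumr l1 m1; lra.
Qed.

Lemma simplex_compact k : compact (@simplex k).
Proof.
have cube := @rV_compact R k (fun=> `[(0:R), 1]%classic) (fun=> @segment_compact R 0 1).
apply: (subclosed_compact _ cube).
- have -> : @simplex k = [set l | forall i, 0 <= l 0 i] `&` [set l | \sum_i l 0 i = 1].
    by [].
  apply: closedI.
    by apply: closed_forall => i; apply: closed_scalar_ge => a u v; rewrite !mxE.
  apply: closed_scalar_eq => a u v.
  by rewrite mulr_sumr -big_split; apply: eq_bigr => i _; rewrite !mxE.
- move=> l [l0 l1] i /=; rewrite in_itv /= l0 -l1 (bigD1 i) //= lerDl.
  exact: sumr_ge0.
Qed.

End Simplex.

Section PositivePart.
Variable R : realDomainType.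
Implicit Types x e : R.

Definition pos_part x : R := Order.max x 0.

Lemma pos_part_ge0 x : 0 <= pos_part x.
Proof. by rewrite le_max lexx orbT. Qed.

Lemma pos_part_ge x : x <= pos_part x.
Proof. by rewrite le_max lexx. Qed.

Lemma pos_part_id x : 0 <= x -> pos_part x = x.
Proof. exact: max_l. Qed.

Lemma pos_part0 x : x <= 0 -> pos_part x = 0.
Proof. exact: max_r. Qed.

Lemma pos_partM x : pos_part x * x = pos_part x ^+ 2.
Proof.
have [h|h] := lerP x 0; first by rewrite pos_part0 // mul0r expr0n.
by rewrite (pos_part_id (ltW h)) expr2.
Qed.

Lemma le_sq_pos_part x e : pos_part (x + e) ^+ 2 <= (pos_part x + e) ^+ 2.
Proof.
have [h|h] := lerP (x + e) 0; first by rewrite pos_part0 // expr0n sqr_ge0.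
rewrite (pos_part_id (ltW h)); have := pos_part_ge x => hx.
have : 0 <= (pos_part x - x) * (pos_part x - x + 2 * (x + e)) by apply: mulr_ge0; lra.
rewrite !expr2; nra.
Qed.

End PositivePart.

Lemma pos_part_sq_first_order (R : realFieldType) k (a d : 'I_k -> R) :
  (forall t, 0 < t <= 1 ->
     \sum_i pos_part (a i) ^+ 2 <= \sum_i pos_part (a i + t * d i) ^+ 2) ->
  0 <= \sum_i pos_part (a i) * d i.
Proof.
move=> hmin; set p := fun i => pos_part (a i).
set S := \sum_i p i * d i; set Q := \sum_i d i ^+ 2.
rewrite leNgt; apply/negP => S_lt0.
have Q_ge0 : 0 <= Q by apply: sumr_ge0 => i _; exact: sqr_ge0.
(* By [le_sq_pos_part], a step of length [t] increases the sum by at most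
   [t * (2 * S + t * Q)], which is [t * S * (1 + t) < 0] for this [t]. *)
pose t := - S / (Q - S).
have QS_gt0 : 0 < Q - S by lra.
have tQS : t * (Q - S) = - S by rewrite /t mulfVK // gt_eqF.
have t_gt0 : 0 < t by rewrite /t divr_gt0 //; lra.
have t_le1 : t <= 1 by rewrite /t ler_pdivrMr //; lra.
have expand : \sum_i (p i + t * d i) ^+ 2 = \sum_i p i ^+ 2 + t * (2 * S + t * Q).
  rewrite /S /Q mulrDr mulrA !mulr_sumr -!big_split; apply: eq_bigr => i _ /=; ring.
have := le_trans (hmin t (andb_true_intro (conj t_gt0 t_le1)))
  (ler_sum _ (fun i _ => le_sq_pos_part (a i) (t * d i))).
rewrite expand lerDl pmulr_rge0 //.
have -> : 2 * S + t * Q = S * (1 + t) by have := tQS; lra.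
by rewrite pmulr_lge0 ?ltr_wpDr //; lra.
Qed.

Lemma continuous_pos_part (R : realType) (T : topologicalType) (g : T -> R) :
  continuous g -> continuous (fun t => pos_part (g t)).
Proof. by move=> hg; apply: max_fun_continuous => //; exact: cst_continuous. Qed.

Section MatrixGame.
Variables (R : realType) (r c : nat) (B : 'M[R]_(r, c)).

Lemma scalar_mulmx_tr (i : 'I_r) : scalar (fun m : 'rV[R]_c => (B *m m^T) i 0).
Proof. by move=> a u w; rewrite linearD linearZ /= mulmxDr -scalemxAr !mxE. Qed.

Lemma scalar_mulmx (j : 'I_c) : scalar (fun l : 'rV[R]_r => (l *m B) 0 j).
Proof. by move=> a u w; rewrite mulmxDl -scalemxAl !mxE. Qed.

Lemma mulmx_tr_delta i j : (B *m (delta_mx 0 j : 'rV[R]_c)^T) i 0 = B i j.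
Proof. by rewrite trmx_delta -colE mxE. Qed.

(* [m0] minimises the squared distance from the payoff vector [B *m m0^T] to
   the orthant below [v]; the conclusion is the first-order optimality condition
   in the directions of the pure strategies. *)
Lemma nearest_mixture (v : R) : (0 < c)%N -> exists2 m0, simplex m0 &
  forall j, 0 <= \sum_i pos_part ((B *m m0^T) i 0 - v) * (B i j - (B *m m0^T) i 0).
Proof.
move=> c_gt0; pose excess (m : 'rV[R]_c) i := (B *m m^T) i 0 - v.
pose dist m := \sum_i pos_part (excess m i) ^+ 2.
have dist_cont : continuous dist.
  apply: continuous_sum => i m.
  have pos_cont : continuous (fun m => pos_part (excess m i)).
    apply: continuous_pos_part => {}m; apply: continuousB; last exact: cst_continuous.
    exact: scalar_continuous (scalar_mulmx_tr i) m.
  exact: continuousM (pos_cont m) (pos_cont m).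
have [|m0 /set_mem m0S m0min] := compact_EVT_min _ (@simplex_compact R c)
    (continuous_subspaceT dist_cont).
  by exists (delta_mx 0 (Ordinal c_gt0)); exact: simplex_delta.
exists m0 => // j; apply: pos_part_sq_first_order => t /andP[t_gt0 t_le1].
have mtS : simplex ((1 - t) *: m0 + t *: delta_mx 0 j).
  by apply: simplex_conv => //; [exact: simplex_delta | rewrite (ltW t_gt0)].
have mtE i : excess ((1 - t) *: m0 + t *: delta_mx 0 j) i =
    excess m0 i + t * (B i j - (B *m m0^T) i 0).
  rewrite /excess (scalar_mulmx_tr i) (scalarfZ (scalar_mulmx_tr i)) mulmx_tr_delta.
  ring.
have := m0min _ (mem_set mtS); rewrite /dist.
by under [X in _ <= X -> _]eq_bigr do rewrite mtE.
Qed.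

(* Ville's theorem of alternatives: if the nearest mixture [m0] does not keep
   every row payoff below [v], the normalised positive parts of its excesses
   form a row strategy beating [v]. *)
Lemma matrix_game_alternative (v : R) : (0 < c)%N ->
  (exists2 m, simplex m & forall i, (B *m m^T) i 0 <= v) \/
  (exists2 l, simplex l & forall j, v < (l *m B) 0 j).
Proof.
move=> c_gt0; have [m0 m0S first_order] := nearest_mixture v c_gt0.
have [le_v|/existsNP[i0 /negP]] := pselect (forall i, (B *m m0^T) i 0 <= v).
  by left; exists m0.
rewrite -ltNge => gt_v; right.
pose p i := pos_part ((B *m m0^T) i 0 - v).
have p_ge0 i : 0 <= p i by exact: pos_part_ge0.
have p_i0 : 0 < p i0 by rewrite /p pos_part_id; lra.
pose P := \sum_i p i.
have P_gt0 : 0 < P.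
  by rewrite /P (bigD1 i0) //= ltr_pwDl // sumr_ge0.
have sq_gt0 : 0 < \sum_i p i ^+ 2.
  by rewrite (bigD1 i0) //= ltr_pwDl ?exprn_gt0 // sumr_ge0 // => i _; exact: sqr_ge0.
have mixed_excess : \sum_i p i * (B *m m0^T) i 0 = \sum_i p i ^+ 2 + v * P.
  rewrite /P mulr_sumr -big_split; apply: eq_bigr => i _ /=.
  by rewrite -pos_partM -/(p i); ring.
exists (P^-1 *: \row_i p i).
  split=> [i|].
    by rewrite !mxE; apply: mulr_ge0 => //; rewrite invr_ge0 ltW.
  by under eq_bigr do rewrite !mxE; rewrite -mulr_sumr mulVf ?gt_eqF.
move=> j; have := first_order j; rewrite -/p.
rewrite (eq_bigr _ (fun i _ => mulrBr (p i) _ _)) sumrB mixed_excess subr_ge0 => le_pB.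
rewrite -scalemxAl mxE -(ltr_pM2l P_gt0) mulrA mulfV ?gt_eqF // mul1r mxE.
under eq_bigr do rewrite mxE.
rewrite mulrC; apply: lt_le_trans le_pB; lra.
Qed.

Lemma matrix_game_value : (0 < r)%N -> (0 < c)%N ->
  exists l m, [/\ simplex l, simplex m & forall i j, (B *m m^T) i 0 <= (l *m B) 0 j].
Proof.
move=> r_gt0 c_gt0; pose j0 := Ordinal c_gt0.
pose worst (l : 'rV[R]_r) := \big[Order.min/(l *m B) 0 j0]_j (l *m B) 0 j.
have worst_cont : continuous worst.
  by apply: continuous_bigmin => [|j]; exact: scalar_continuous (scalar_mulmx _).
have [|l /set_mem lS lmax] := compact_EVT_max _ (@simplex_compact R r)
    (continuous_subspaceT worst_cont).
  by exists (delta_mx 0 (Ordinal r_gt0)); exact: simplex_delta.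
have [[m mS le_m]|[l' l'S gt_l']] := matrix_game_alternative (worst l) c_gt0.
  by exists l, m; split => // i j; apply: le_trans (le_m i) _; exact: bigmin_le.
have := lmax _ (mem_set l'S); rewrite leNgt => /negP; case.
by apply/bigmin_gtP; split => [|j _]; exact: gt_l'.
Qed.

End MatrixGame.

Definition convex_comb_closed (R : realType) n (X : set 'rV[R]_n) :=
  forall k (l : 'rV[R]_k) (p : 'I_k -> 'rV[R]_n),
    simplex l -> (forall i, X (p i)) -> X (\sum_i l 0 i *: p i).

Lemma compact_fip (T : topologicalType) (A : set T) (I : choiceType) (D : set I)
    (g : I -> set T) :
  compact A -> D !=set0 -> (forall i, D i -> closed (g i)) ->
  finI D (fun i => A `&` g i) -> exists2 p, A p & forall i, D i -> g i p.
Proof.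
move=> cA [i Di] g_closed finIAg.
have [|p [Ap p_clusters]] := cA _ (finI_filter finIAg).
  by exists (A `&` g i); [exact: finI_from1 | move=> ? []].
exists p => // j Dj; apply: g_closed => // B.
by apply: p_clusters; exists (A `&` g j); [exact: finI_from1 | move=> ? []].
Qed.

Section BilinearMinimax.
Variables (R : realType) (N M : nat).
Variables (X : set 'rV[R]_N) (Y : set 'rV[R]_M) (f : 'rV[R]_N -> 'rV[R]_M -> R).
Hypotheses (cX : compact X) (cY : compact Y) (X0 : X !=set0) (Y0 : Y !=set0).
Hypotheses (convX : convex_comb_closed X) (convY : convex_comb_closed Y).
Hypotheses (f_scalarl : forall y, scalar (f^~ y)) (f_scalarr : forall x, scalar (f x)).

(* The restriction of the game to the points of [s] is a matrix game. *)
Lemma finite_saddle (s : seq ('rV[R]_N * 'rV[R]_M)) :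
  (forall z, z \in s -> X z.1 /\ Y z.2) ->
  exists2 x, X x & exists2 y, Y y & forall z, z \in s -> f z.1 y <= f x z.2.
Proof.
move=> sXY; have [x1 Xx1] := X0; have [y1 Yy1] := Y0.
have [->|s_neq0] := eqVneq s [::]; first by exists x1 => //; exists y1.
have s_gt0 : (0 < size s)%N by rewrite lt0n size_eq0.
pose z t := nth (x1, y1) s t.
have zXY (t : 'I_(size s)) : X (z t).1 /\ Y (z t).2 by apply/sXY/mem_nth.
pose B := \matrix_(t < size s, t' < size s) f (z t).1 (z t').2.
have [l [m [lS mS le_lm]]] := matrix_game_value B s_gt0 s_gt0.
exists (\sum_t l 0 t *: (z t).1); first by apply: convX => // t; case: (zXY t).
exists (\sum_t m 0 t *: (z t).2); first by apply: convY => // t; case: (zXY t).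
move=> w w_s; have t_lt : (index w s < size s)%N by rewrite index_mem.
have zt : z (Ordinal t_lt) = w by exact: nth_index.
have := le_lm (Ordinal t_lt) (Ordinal t_lt).
have -> : (B *m m^T) (Ordinal t_lt) 0 = f w.1 (\sum_t m 0 t *: (z t).2).
  rewrite (scalarf_sum (f_scalarr _)) mxE; apply: eq_bigr => t _.
  by rewrite (scalarfZ (f_scalarr _)) !mxE zt mulrC.
have -> // : (l *m B) 0 (Ordinal t_lt) = f (\sum_t l 0 t *: (z t).1) w.2.
rewrite (scalarf_sum (f_scalarl _)) mxE; apply: eq_bigr => t _.
by rewrite (scalarfZ (f_scalarl _)) !mxE zt.
Qed.

Lemma bilinear_saddle : exists x0 y0,
  [/\ X x0, Y y0 & forall x y, X x -> Y y -> f x y0 <= f x0 y].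
Proof.
pose XY := X `*` Y.
pose above (z : 'rV[R]_N * 'rV[R]_M) :=
  [set w : 'rV[R]_N * 'rV[R]_M | f z.1 w.2 <= f w.1 z.2].
have above_closed z : closed (above z).
  have -> : above z = (fun w => f w.1 z.2 - f z.1 w.2) @^-1` [set x | 0 <= x].
    by apply/seteqP; split => w /=; rewrite subr_ge0.
  apply: (continuous_closedP _).1 (@closed_ge _ 0) => w; apply: continuousB.
    apply: (continuous_comp (f := fst) (g := f^~ z.2)); first exact: cvg_fst.
    exact: scalar_continuous.
  apply: (continuous_comp (f := snd) (g := f z.1)); first exact: cvg_snd.
  exact: scalar_continuous.
have [[x0 y0] [/= Xx0 Yy0] saddle] : exists2 w, XY w & forall z, XY z -> above z w.
  apply: compact_fip (compact_setX cX cY) _ (fun z _ => above_closed z) _.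
    by case: X0 => x Xx; case: Y0 => y Yy; exists (x, y).
  move=> D' D'XY; have [|x Xx [y Yy le_xy]] := finite_saddle (s := D').
    by move=> z /D'XY; rewrite in_setE.
  by exists (x, y) => z /= zD'; split; [split | exact: le_xy].
by exists x0, y0; split => // x y Xx Yy; exact: (saddle (x, y)).
Qed.

Lemma scalar_min_attained x : exists2 y, Y y & forall y', Y y' -> f x y <= f x y'.
Proof.
have [y /set_mem Yy ymin] := compact_EVT_min Y0 cY
  (continuous_subspaceT (scalar_continuous (f_scalarr x))).
by exists y => // y' Yy'; exact: ymin _ (mem_set Yy').
Qed.

Lemma scalar_max_attained y : exists2 x, X x & forall x', X x' -> f x' y <= f x y.
Proof.
have [x /set_mem Xx xmax] := compact_EVT_max X0 cX
  (continuous_subspaceT (scalar_continuous (f_scalarl y))).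
by exists x => // x' Xx'; exact: xmax _ (mem_set Xx').
Qed.

End BilinearMinimax.

Lemma saddle_point_value (R : realType) (T U : Type) (S1 : T -> Prop)
    (S2 : U -> Prop) (P : T -> U -> R) x0 y0 :
  S1 x0 -> S2 y0 -> (forall x y, S1 x -> S2 y -> P x y0 <= P x0 y) ->
  (forall x, S1 x -> exists2 y, S2 y & forall y', S2 y' -> P x y <= P x y') ->
  (forall y, S2 y -> exists2 x, S1 x & forall x', S1 x' -> P x' y <= P x y) ->
  maxmin_is S1 S2 P (P x0 y0) /\ minmax_is S1 S2 P (P x0 y0).
Proof.
move=> S1x0 S2y0 saddle min_attained max_attained; split; split.
- move=> x S1x; have [y S2y ymin] := min_attained x S1x.
  by exists (P x y); split => //; exists y.
- split; first by exists x0 => //; split => [|y S2y]; [exists y0 | exact: saddle].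
  by move=> x m S1x [_ mmin]; exact: le_trans (mmin _ S2y0) (saddle _ _ S1x S2y0).
- move=> y S2y; have [x S1x xmax] := max_attained y S2y.
  by exists (P x y); split => //; exists x.
- split; first by exists y0 => //; split => [|x S1x]; [exists x0 | exact: saddle].
  by move=> y m S2y [_ mmax]; exact: le_trans (saddle _ _ S1x0 S2y) (mmax _ S1x0).
Qed.

Lemma big_mxvec (R : Type) (idx : R) (op : Monoid.com_law idx) m p
    (F : 'I_(m * p) -> R) :
  \big[op/idx]_k F k = \big[op/idx]_i \big[op/idx]_j F (mxvec_index i j).
Proof.
rewrite pair_big /= (reindex (uncurry (@mxvec_index m p))).
  by apply: eq_bigr => -[i j] _.
by case: (curry_mxvec_bij m p) => g h1 h2; exists g => x _; [exact: h1 | exact: h2].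
Qed.

Section ComplexNumbers.
Variable R : realType.
Local Notation C := R[i].

Lemma eqC_ReIm (z w : C) :
  z = w <-> complex.Re z = complex.Re w /\ complex.Im z = complex.Im w.
Proof. by split=> [->//|]; case: z => x y; case: w => x' y' /= [-> ->]. Qed.

Lemma geC0_ReIm (z : C) : 0 <= z <-> complex.Im z = 0 /\ 0 <= complex.Re z.
Proof. by rewrite lecE; split => [/andP[/eqP -> ->]//|[-> ->]]; rewrite eqxx. Qed.

Lemma Re_scale_add (a : R) (z w : C) :
  complex.Re (a%:C * z + w) = a * complex.Re z + complex.Re w.
Proof. by case: z => x y; case: w => x' y' /=; ring. Qed.

Lemma Im_scale_add (a : R) (z w : C) :
  complex.Im (a%:C * z + w) = a * complex.Im z + complex.Im w.
Proof. by case: z => x y; case: w => x' y' /=; ring. Qed.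

Lemma conjC_real (a : R) : (a%:C)^* = a%:C.
Proof. by rewrite conj_Creal // complex_real. Qed.

Lemma conjC_sum (I : Type) (r : seq I) (P : pred I) (F : I -> C) :
  (\sum_(i <- r | P i) F i)^* = \sum_(i <- r | P i) (F i)^*.
Proof. exact: rmorph_sum. Qed.

Lemma conjCM (z w : C) : (z * w)^* = z^* * w^*.
Proof. exact: rmorphM. Qed.

Lemma conjC_scale_add (a : R) (z w : C) : (a%:C * z + w)^* = a%:C * z^* + w^*.
Proof. by case: z => x y; case: w => x' y'; apply/eqC_ReIm; split => /=; ring. Qed.

End ComplexNumbers.

Section Adjoint.
Variable R : realType.
Local Notation C := R[i].

Lemma adjmx_mul m p r (A : 'M[C]_(m, p)) (B : 'M[C]_(p, r)) :
  adjmx (A *m B) = adjmx B *m adjmx A.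
Proof.
apply/matrixP => i j; rewrite !mxE rmorph_sum; apply: eq_bigr => k _.
by rewrite !mxE rmorphM mulrC.
Qed.

Lemma adjmxK m p (A : 'M[C]_(m, p)) : adjmx (adjmx A) = A.
Proof. by apply/matrixP => i j; rewrite !mxE conjCK. Qed.

Lemma adjmxD m p (A B : 'M[C]_(m, p)) : adjmx (A + B) = adjmx A + adjmx B.
Proof. by apply/matrixP => i j; rewrite !mxE rmorphD. Qed.

Lemma adjmxZ m p (c : C) (A : 'M[C]_(m, p)) : adjmx (c *: A) = c^* *: adjmx A.
Proof. by apply/matrixP => i j; rewrite !mxE rmorphM. Qed.

Lemma adjmx_sum m p (I : Type) (r : seq I) (P : pred I) (F : I -> 'M[C]_(m, p)) :
  adjmx (\sum_(i <- r | P i) F i) = \sum_(i <- r | P i) adjmx (F i).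
Proof.
apply/matrixP => i j; rewrite mxE !summxE rmorph_sum; apply: eq_bigr => k _.
by rewrite !mxE.
Qed.

Lemma adjmx1 m : adjmx (1%:M : 'M[C]_m) = 1%:M.
Proof. by apply/matrixP => i j; rewrite !mxE conjC_nat eq_sym. Qed.

Lemma mxtrace_adjmx_mul m p (A B : 'M[C]_(m, p)) :
  \tr (adjmx A *m B) = \sum_k (mxvec A 0 k)^* * mxvec B 0 k.
Proof.
rewrite big_mxvec /mxtrace [RHS]exchange_big; apply: eq_bigr => j _.
by rewrite mxE; apply: eq_bigr => i _; rewrite !mxE !mxvecE.
Qed.

End Adjoint.

Section RealCoordinates.
Variables (R : realType) (K : nat).
Local Notation C := R[i].
Local Notation coords := 'rV[R]_(K * K + K * K).

Definition cmx_of_rV (r : coords) : 'M[C]_K :=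
  \matrix_(a, b) Complex (vec_mx (lsubmx r) a b) (vec_mx (rsubmx r) a b).

Definition rV_of_cmx (A : 'M[C]_K) : coords :=
  row_mx (mxvec (map_mx (@complex.Re R) A)) (mxvec (map_mx (@complex.Im R) A)).

Lemma rV_of_cmxK : cancel rV_of_cmx cmx_of_rV.
Proof.
move=> A; rewrite /cmx_of_rV /rV_of_cmx row_mxKl row_mxKr !mxvecK.
by apply/matrixP => a b; rewrite !mxE; case: (A a b).
Qed.

Lemma cmx_of_rV_comb (a : R) r s :
  cmx_of_rV (a *: r + s) = a%:C *: cmx_of_rV r + cmx_of_rV s.
Proof.
rewrite /cmx_of_rV !linearD !linearZ /=; apply/matrixP => i j; rewrite !mxE.
by apply/eqC_ReIm => /=; split; ring.
Qed.

Lemma cmx_of_rV_sum k (l : 'I_k -> R) (p : 'I_k -> coords) :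
  cmx_of_rV (\sum_i l i *: p i) = \sum_i (l i)%:C *: cmx_of_rV (p i).
Proof.
apply: (big_rec2 (fun r A => cmx_of_rV r = A)); last first.
  by move=> i r A _ <-; rewrite cmx_of_rV_comb.
by rewrite /cmx_of_rV !linear0; apply/matrixP => i j; rewrite !mxE.
Qed.

Definition real_linear (h : 'M[C]_K -> C) :=
  forall (a : R) A B, h (a%:C *: A + B) = a%:C * h A + h B.

Lemma closed_real_linear_eq h c : real_linear h -> closed [set r | h (cmx_of_rV r) = c].
Proof.
move=> hlin; have -> : [set r | h (cmx_of_rV r) = c] =
   [set r | complex.Re (h (cmx_of_rV r)) = complex.Re c] `&`
   [set r | complex.Im (h (cmx_of_rV r)) = complex.Im c].
  by apply/seteqP; split => r /=; rewrite eqC_ReIm.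
by apply: closedI; apply: closed_scalar_eq => a r s;
  rewrite cmx_of_rV_comb hlin (Re_scale_add, Im_scale_add).
Qed.

Lemma closed_real_linear_ge0 h : real_linear h -> closed [set r | 0 <= h (cmx_of_rV r)].
Proof.
move=> hlin; have -> : [set r | 0 <= h (cmx_of_rV r)] =
   [set r | complex.Im (h (cmx_of_rV r)) = 0] `&`
   [set r | 0 <= complex.Re (h (cmx_of_rV r))].
  by apply/seteqP; split => r /=; rewrite geC0_ReIm.
apply: closedI; [apply: closed_scalar_eq | apply: closed_scalar_ge] => a r s;
  by rewrite cmx_of_rV_comb hlin (Re_scale_add, Im_scale_add).
Qed.

Lemma real_linear_wsum (T : 'I_K -> 'I_K -> C) :
  real_linear (fun A => \sum_a \sum_b A a b * T a b).
Proof.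
move=> c A B; rewrite mulr_sumr -big_split; apply: eq_bigr => a _ /=.
rewrite mulr_sumr -big_split; apply: eq_bigr => b _ /=.
by rewrite !mxE mulrDl mulrA.
Qed.

End RealCoordinates.

Section StrategySpace.
Variables (R : realType) (n : nat).
Local Notation C := R[i].
Local Notation K := (n * n)%N.
Variables (E : 'I_K -> 'M[C]_n) (Ro rho : 'M[C]_K).
Local Notation G a b := (adjmx (E a) *m E b).

Lemma Omega_closed : closed [set r : 'rV[R]_(K * K + K * K) | Omega E (cmx_of_rV r)].
Proof.
have -> : [set r : 'rV[R]_(K * K + K * K) | Omega E (cmx_of_rV r)] =
   [set r | forall i, [set r | forall j,
      adjmx (cmx_of_rV r) i j - cmx_of_rV r i j = 0] r] `&`
   [set r | forall v : 'cV[C]_K, 0 <= (adjmx v *m cmx_of_rV r *m v) 0 0] `&`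
   [set r | forall i, [set r | forall j,
      (\sum_a \sum_b (cmx_of_rV r a b)^* *: G a b) i j = (1%:M : 'M[C]_n) i j] r].
  apply/seteqP; split => r /=.
    case=> [[herm psd] tp]; split; [split|] => //.
      by move=> i j; rewrite herm subrr.
    by move=> i j; rewrite tp.
  case=> [[herm psd] tp]; split; [split|] => //; apply/matrixP => i j.
    exact/subr0_eq/herm.
  exact: tp.
apply: closedI; first apply: closedI.
- apply: closed_forall => i; apply: closed_forall => j.
  apply: (closed_real_linear_eq (h := fun A => adjmx A i j - A i j)).
  by move=> a A B; rewrite !mxE conjC_scale_add; ring.
- apply: closed_forall => v.
  apply: (closed_real_linear_ge0 (h := fun A => (adjmx v *m A *m v) 0 0)).
  by move=> a A B; rewrite mulmxDr -scalemxAr mulmxDl -scalemxAl !mxE.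
- apply: closed_forall => i; apply: closed_forall => j.
  apply: (closed_real_linear_eq (h := fun A => (\sum_a \sum_b (A a b)^* *: G a b) i j)).
  move=> a A B /=; rewrite !summxE mulr_sumr -big_split; apply: eq_bigr => x _ /=.
  rewrite !summxE mulr_sumr -big_split; apply: eq_bigr => y _ /=.
  by rewrite !mxE conjC_scale_add; ring.
Qed.

Lemma Omega_convex_comb k (l : 'rV[R]_k) (chi : 'I_k -> 'M[C]_K) :
  simplex l -> (forall i, Omega E (chi i)) -> Omega E (\sum_i (l 0 i)%:C *: chi i).
Proof.
move=> [l_ge0 l_sum1] chiO; split; first split.
- rewrite adjmx_sum; apply: eq_bigr => i _.
  by rewrite adjmxZ conjC_real (chiO i).1.1.
- move=> v; rewrite mulmx_sumr mulmx_suml summxE; apply: sumr_ge0 => i _.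
  rewrite -scalemxAr -scalemxAl mxE; apply: mulr_ge0; first by rewrite ler0c.
  exact: (chiO i).1.2.
- have -> : \sum_a \sum_b ((\sum_i (l 0 i)%:C *: chi i) a b)^* *: G a b =
      \sum_i (l 0 i)%:C *: \sum_a \sum_b (chi i a b)^* *: G a b.
    under eq_bigr do under eq_bigr do rewrite summxE conjC_sum scaler_suml.
    under eq_bigr do rewrite exchange_big.
    rewrite exchange_big; apply: eq_bigr => i _; rewrite scaler_sumr.
    apply: eq_bigr => a _; rewrite scaler_sumr; apply: eq_bigr => b _.
    by rewrite mxE conjCM conjC_real scalerA.
  under eq_bigr do rewrite (chiO _).2.
  by rewrite -scaler_suml -rmorph_sum l_sum1 scale1r.
Qed.

Lemma payoffC_suml chi xi : payoffC E Ro rho chi xi =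
  \sum_a \sum_b chi a b * (\sum_c \sum_d xi c d * coefA E Ro rho a b c d).
Proof.
apply: eq_bigr => a _; apply: eq_bigr => b _.
rewrite mulr_sumr; apply: eq_bigr => c _; rewrite mulr_sumr; apply: eq_bigr => d _.
by rewrite mulrA.
Qed.

Lemma payoffC_sumr chi xi : payoffC E Ro rho chi xi =
  \sum_c \sum_d xi c d * (\sum_a \sum_b chi a b * coefA E Ro rho a b c d).
Proof.
rewrite /payoffC; under eq_bigr do rewrite exchange_big.
rewrite exchange_big; apply: eq_bigr => c _.
under eq_bigr do rewrite exchange_big.
rewrite exchange_big; apply: eq_bigr => d _.
rewrite mulr_sumr; apply: eq_bigr => a _; rewrite mulr_sumr; apply: eq_bigr => b _.
by rewrite mulrA [xi c d * _]mulrC.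
Qed.

Lemma payoff_scalarl s :
  scalar (fun r => payoff E Ro rho (cmx_of_rV r) (cmx_of_rV s)).
Proof.
move=> a r r'; rewrite /payoff !payoffC_suml cmx_of_rV_comb real_linear_wsum.
exact: Re_scale_add.
Qed.

Lemma payoff_scalarr r :
  scalar (fun s => payoff E Ro rho (cmx_of_rV r) (cmx_of_rV s)).
Proof.
move=> a s s'; rewrite /payoff !payoffC_sumr cmx_of_rV_comb real_linear_wsum.
exact: Re_scale_add.
Qed.

End StrategySpace.

Section EntryBounds.
Variable R : realType.
Local Notation C := R[i].

Definition cabs1 (z : C) : R := `|complex.Re z| + `|complex.Im z|.

Lemma cabs1_ge0 z : 0 <= cabs1 z.
Proof. by rewrite /cabs1 addr_ge0. Qed.

Lemma cabs1D z w : cabs1 (z + w) <= cabs1 z + cabs1 w.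
Proof.
case: z => a b; case: w => c d; rewrite /cabs1 /=.
by have := ler_normD a c; have := ler_normD b d; lra.
Qed.

Lemma cabs1M z w : cabs1 (z * w) <= cabs1 z * cabs1 w.
Proof.
case: z => a b; case: w => c d; rewrite /cabs1 /=.
have re : `|a * c - b * d| <= `|a| * `|c| + `|b| * `|d|.
  by rewrite -!normrM; apply: le_trans (ler_normB _ _) _.
have im : `|a * d + b * c| <= `|a| * `|d| + `|b| * `|c|.
  by rewrite -!normrM; apply: ler_normD.
have : `|a| * `|c| + `|b| * `|d| + (`|a| * `|d| + `|b| * `|c|) =
  (`|a| + `|b|) * (`|c| + `|d|) by ring.
lra.
Qed.

Lemma cabs1_sum (I : Type) (r : seq I) (P : pred I) (F : I -> C) :
  cabs1 (\sum_(i <- r | P i) F i) <= \sum_(i <- r | P i) cabs1 (F i).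
Proof.
apply: (big_rec2 (fun z x => cabs1 z <= x)); first by rewrite /cabs1 /= normr0 addr0.
by move=> i z x _ h; apply: le_trans (cabs1D _ _) _; rewrite lerD2l.
Qed.

Lemma cabs1_conj z : cabs1 z^* = cabs1 z.
Proof. by case: z => a b; rewrite /cabs1 /= normrN. Qed.

Lemma normr_Re_le_cabs1 z : `|complex.Re z| <= cabs1 z.
Proof. by rewrite /cabs1 lerDl. Qed.

Lemma normr_Im_le_cabs1 z : `|complex.Im z| <= cabs1 z.
Proof. by rewrite /cabs1 lerDr. Qed.

Lemma form_delta2 m (A : 'M[C]_m) k l (x y : C) :
  let u : 'cV[C]_m := x *: delta_mx k 0 + y *: delta_mx l 0 in
  (adjmx u *m A *m u) 0 0 =
  x^* * x * A k k + x^* * y * A k l + y^* * x * A l k + y^* * y * A l l.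
Proof.
have form_delta (i j : 'I_m) :
    adjmx (delta_mx i 0 : 'cV[C]_m) *m A *m delta_mx j 0 = (A i j)%:M.
  have -> : adjmx (delta_mx i 0 : 'cV[C]_m) = delta_mx 0 i.
    by apply/matrixP => a b; rewrite !mxE conjC_nat andbC.
  by apply/matrixP => a b; rewrite [a]ord1 [b]ord1 -rowE -colE !mxE eqxx mulr1n.
rewrite /= adjmxD !adjmxZ !mulmxDl !mulmxDr -!scalemxAl -!scalemxAr !form_delta.
by rewrite !mxE !eqxx !mulr1n; ring.
Qed.

(* It suffices to test [c = 1, -1, i, -i]. *)
Lemma cabs1_offdiag_le (akk all akl : C) :
  complex.Im akk = 0 -> complex.Im all = 0 ->
  (forall c : C, 0 <= complex.Re (akk + c * akl + c^* * akl^* + c^* * c * all)) ->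
  cabs1 akl <= complex.Re akk + complex.Re all.
Proof.
case: akk => dk ek; case: all => dl el; case: akl => x y /= -> -> form_ge0.
have := form_ge0 (Complex 1 0); have := form_ge0 (Complex (-1) 0).
have := form_ge0 (Complex 0 1); have := form_ge0 (Complex 0 (-1)).
rewrite /cabs1 /= => h1 h2 h3 h4.
have : `|x| <= (dk + dl) / 2 by rewrite ler_norml; apply/andP; split; lra.
have : `|y| <= (dk + dl) / 2 by rewrite ler_norml; apply/andP; split; lra.
lra.
Qed.

Lemma psd_entry_bound m (A : 'M[C]_m) (t : R) :
  psd_herm A -> \tr A = t%:C -> forall k l, cabs1 (A k l) <= 2 * t.
Proof.
move=> [herm psd] trA k l.
have diag i : complex.Im (A i i) = 0 /\ 0 <= complex.Re (A i i).
  have := psd (1 *: delta_mx i 0 + 0 *: delta_mx i 0).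
  by rewrite form_delta2 conjC1 conjC0 !mul1r !mul0r !addr0 => /geC0_ReIm.
have diag_le i : complex.Re (A i i) <= t.
  have <- : \sum_i complex.Re (A i i) = t by rewrite -raddf_sum -/(mxtrace A) trA.
  by rewrite (bigD1 i) //= lerDl; apply: sumr_ge0 => j _; exact: (diag j).2.
apply: (le_trans (cabs1_offdiag_le (diag k).1 (diag l).1 _)).
  have Alk : A l k = (A k l)^* by rewrite -[in LHS]herm mxE.
  move=> c; have := psd (1 *: delta_mx k 0 + c *: delta_mx l 0).
  by rewrite form_delta2 conjC1 !mul1r !mulr1 Alk => /geC0_ReIm [_]; rewrite mulrC.
by have := diag_le k; have := diag_le l; lra.
Qed.

Lemma cabs1_sandwich_le m (Z X : 'M[C]_m) (c : R) a b :
  (forall k l, cabs1 (X k l) <= c) ->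
  cabs1 ((adjmx Z *m X *m Z) a b) <=
    c * (\sum_x \sum_y cabs1 (Z x y)) * (\sum_x \sum_y cabs1 (Z x y)).
Proof.
move=> X_le; set S := \sum_x \sum_y cabs1 (Z x y).
have c_ge0 : 0 <= c by apply: le_trans (cabs1_ge0 _) (X_le a a).
have col_ge0 j : 0 <= \sum_x cabs1 (Z x j).
  by apply: sumr_ge0 => x _; exact: cabs1_ge0.
have col_le j : \sum_x cabs1 (Z x j) <= S.
  apply: ler_sum => x _; rewrite (bigD1 j) //= lerDl.
  by apply: sumr_ge0 => y _; exact: cabs1_ge0.
rewrite !mxE; apply: le_trans (cabs1_sum _ _ _) _.
apply: (@le_trans _ _ (\sum_l (c * \sum_k cabs1 (Z k a)) * cabs1 (Z l b))).
  apply: ler_sum => l _; apply: le_trans (cabs1M _ _) _.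
  apply: ler_wpM2r; first exact: cabs1_ge0.
  rewrite mxE; apply: le_trans (cabs1_sum _ _ _) _; rewrite mulr_sumr.
  apply: ler_sum => k _; apply: le_trans (cabs1M _ _) _; rewrite !mxE cabs1_conj mulrC.
  by apply: ler_wpM2r; [exact: cabs1_ge0 | exact: X_le].
rewrite -mulr_sumr -!mulrA; apply: ler_wpM2l => //.
by apply: ler_pM; [exact: col_ge0 | exact: col_ge0 | exact: col_le | exact: col_le].
Qed.

End EntryBounds.

Section StrategyBounds.
Variables (R : realType) (n : nat).
Local Notation C := R[i].
Local Notation K := (n * n)%N.
Variable E : 'I_K -> 'M[C]_n.
Hypothesis E_basis : is_mx_basis E.
Local Notation G a b := (adjmx (E a) *m E b).

Let T : 'M[C]_K := \matrix_(a < K) mxvec (E a).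
Let W : 'M[C]_K := map_mx Num.conj T.

Let T_unit : T \in unitmx.
Proof. by rewrite -row_free_unit; case: E_basis. Qed.

Let W_unit : W \in unitmx.
Proof. by rewrite /W map_unitmx T_unit. Qed.

Lemma Omega_congruence_trace chi : Omega E chi -> \tr (adjmx W *m chi *m W) = n%:R.
Proof.
move=> [_ tp].
have lhsE :
    \tr (adjmx W *m chi *m W) = \sum_k \sum_b \sum_a T a k * chi a b * (T b k)^*.
  rewrite /mxtrace; apply: eq_bigr => k _; rewrite mxE; apply: eq_bigr => b _.
  by rewrite mxE mulr_suml; apply: eq_bigr => a _; rewrite !mxE conjCK.
have trE : \tr (\sum_a \sum_b (chi a b)^* *: G a b) =
    \sum_a \sum_b (chi a b)^* * \sum_k (T a k)^* * T b k.
  rewrite linear_sum; apply: eq_bigr => a _; rewrite linear_sum; apply: eq_bigr => b _.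
  rewrite linearZ /= mxtrace_adjmx_mul; congr (_ * _).
  by apply: eq_bigr => k _; rewrite !mxE.
have nE : (n%:R : C) = \sum_a \sum_b \sum_k T a k * chi a b * (T b k)^*.
  rewrite -conjC_nat -mxtrace1 -tp trE conjC_sum; apply: eq_bigr => a _.
  rewrite conjC_sum; apply: eq_bigr => b _.
  rewrite conjCM conjCK conjC_sum mulr_sumr; apply: eq_bigr => k _.
  by rewrite conjCM conjCK; ring.
rewrite lhsE nE exchange_big.
by under eq_bigr do rewrite exchange_big; rewrite exchange_big.
Qed.

(* [chi] is the congruence by [W^-1] of a positive matrix of trace [n]. *)
Lemma Omega_bounded :
  exists c : R, forall chi, Omega E chi -> forall a b, cabs1 (chi a b) <= c.
Proof.
pose Z := invmx W; set S := \sum_x \sum_y cabs1 (Z x y).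
exists (2 * n%:R * S * S) => chi chiO a b.
have psd_W : psd_herm (adjmx W *m chi *m W).
  split; first by rewrite !adjmx_mul adjmxK chiO.1.1 mulmxA.
  by move=> v; have := chiO.1.2 (W *m v); rewrite adjmx_mul !mulmxA.
have trW : \tr (adjmx W *m chi *m W) = (n%:R : R)%:C.
  by rewrite Omega_congruence_trace // rmorph_nat.
have -> : chi = adjmx Z *m (adjmx W *m chi *m W) *m Z.
  rewrite !mulmxA -adjmx_mul mulmxV // adjmx1 mul1mx -mulmxA.
  by rewrite mulmxV // mulmx1.
by apply: cabs1_sandwich_le => k l; exact: psd_entry_bound psd_W trW k l.
Qed.

(* The coordinates [e] of the identity in the basis give the map with the single
   Kraus operator [I]. *)
Lemma Omega_nonempty : exists chi, Omega E chi.
Proof.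
pose e : 'rV[C]_K := mxvec (1%:M : 'M[C]_n) *m invmx T.
have eE : \sum_a e 0 a *: E a = 1%:M.
  have eT : e *m T = mxvec 1%:M by rewrite mulmxKV.
  apply: (can_inj mxvecK); rewrite -eT mulmx_sum_row linear_sum; apply: eq_bigr => a _.
  by rewrite linearZ /= rowK.
exists (\matrix_(a, b) (e 0 a * (e 0 b)^*)); split; first split.
- by apply/matrixP => i j; rewrite !mxE conjCM conjCK mulrC.
- move=> v; set z := \sum_i (v i 0)^* * e 0 i.
  have -> : (adjmx v *m \matrix_(a, b) (e 0 a * (e 0 b)^*) *m v) 0 0 = z * z^*.
    rewrite conjC_sum mulr_sumr mxE; apply: eq_bigr => j _.
    rewrite mxE mulr_suml mulr_suml; apply: eq_bigr => i _.
    by rewrite !mxE conjCM conjCK; ring.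
  exact: mul_conjC_ge0.
- transitivity (adjmx (\sum_a e 0 a *: E a) *m (\sum_b e 0 b *: E b));
    last by rewrite eE adjmx1 mulmx1.
  rewrite adjmx_sum mulmx_suml; apply: eq_bigr => a _.
  rewrite mulmx_sumr; apply: eq_bigr => b _.
  by rewrite !mxE adjmxZ -scalemxAl -scalemxAr scalerA conjCM conjCK.
Qed.

Lemma Omega_compact : compact [set r : 'rV[R]_(K * K + K * K) | Omega E (cmx_of_rV r)].
Proof.
have [c Omega_le] := Omega_bounded.
have cube := @rV_compact R (K * K + K * K) (fun=> `[- c, c]%classic)
  (fun=> @segment_compact R _ _).
apply: (subclosed_compact _ cube); first exact: Omega_closed.
move=> r rO k /=; rewrite in_itv /= -ler_norml.
rewrite -(@fintype.splitK _ _ k); case: (fintype.split k) => /mxvec_indexP[i j] /=.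
  apply: le_trans (Omega_le _ rO i j).
  have -> : r 0 (lshift _ (mxvec_index i j)) = complex.Re (cmx_of_rV r i j).
    by rewrite !mxE.
  exact: normr_Re_le_cabs1.
apply: le_trans (Omega_le _ rO i j).
have -> : r 0 (rshift _ (mxvec_index i j)) = complex.Im (cmx_of_rV r i j).
  by rewrite !mxE.
exact: normr_Im_le_cabs1.
Qed.

End StrategyBounds.

Lemma Omega_minimax (R : realType) n (E : 'I_(n * n) -> 'M[R[i]]_n)
    (Ro rho : 'M[R[i]]_(n * n)) :
  is_mx_basis E -> exists v : R,
    maxmin_is (Omega E) (Omega E) (payoff E Ro rho) v /\
    minmax_is (Omega E) (Omega E) (payoff E Ro rho) v.
Proof.
move=> E_basis.
pose X := [set r : 'rV[R]_(n * n * (n * n) + n * n * (n * n)) | Omega E (cmx_of_rV r)].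
have XE chi : Omega E chi -> X (rV_of_cmx chi) by rewrite /X /= rV_of_cmxK.
have cX : compact X := Omega_compact E_basis.
have X0 : X !=set0 by have [chi /XE] := Omega_nonempty E_basis; exists (rV_of_cmx chi).
have convX : convex_comb_closed X.
  by move=> k l p lS pX; rewrite /X /= cmx_of_rV_sum; exact: Omega_convex_comb.
have payl := @payoff_scalarl R n E Ro rho; have payr := @payoff_scalarr R n E Ro rho.
have [r0 [s0 [Xr0 Xs0 saddle]]] := bilinear_saddle cX cX X0 X0 convX convX payl payr.
exists (payoff E Ro rho (cmx_of_rV r0) (cmx_of_rV s0)); apply: saddle_point_value => //.
- move=> chi xi /XE Xchi /XE Xxi.
  by have := saddle _ _ Xchi Xxi; rewrite !rV_of_cmxK.
- move=> chi /XE Xchi; have [s Xs smin] := scalar_min_attained cX X0 payr (rV_of_cmx chi).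
  exists (cmx_of_rV s) => // xi /XE Xxi.
  by have := smin _ Xxi; rewrite !rV_of_cmxK.
- move=> xi /XE Xxi; have [r Xr rmax] := scalar_max_attained cX X0 payl (rV_of_cmx xi).
  exists (cmx_of_rV r) => // chi /XE Xchi.
  by have := rmax _ Xchi; rewrite !rV_of_cmxK.
Qed.

Theorem theorem2 (R : realType) (q : nat)
    (E : 'I_(2 ^ q * 2 ^ q) -> 'M[R[i]]_(2 ^ q))
    (rho : 'M[R[i]]_(2 ^ q * 2 ^ q))
    (L : nat) (M : 'I_L -> 'M[R[i]]_(2 ^ q * 2 ^ q)) (aI aII : 'I_L -> R) :
  is_mx_basis E ->
  density rho ->
  povm M ->
  (forall m, aII m = - aI m) ->
  exists v : R,
    maxmin_is (Omega E) (Omega E) (payoff E (obsR aI M) rho) v /\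
    minmax_is (Omega E) (Omega E) (payoff E (obsR aI M) rho) v.
Proof.
by move=> E_basis _ _ _; exact: Omega_minimax.
Qed.
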